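(* Let $i\geq 2$ be an integer and let $D$ be an oriented graph (a digraph with no pair of opposite arcs) with $D\in\mathcal{LE}_i$. Then $D$ has a vertex $v$ such that $|N^{++}(v)|\geq |N^+(v)|$, where $N^+(v)$ is the out-neighbourhood of $v$ and $N^{++}(v)=\big(\bigcup_{u\in N^+(v)}N^+(u)\big)\setminus N^+(v)$. (That is, Seymour's Second Neighbourhood Conjecture holds for every digraph in $\mathcal{LE}_i$, $i\ge 2$.)
   Context: All digraphs are finite, without loops or multiple arcs. Paths and cycles are directed; the length of a path or cycle is its number of arcs. A digraph is strong if for every ordered pair of vertices $x,y$ there is a directed path from $x$ to $y$. For a subdigraph $H$ of a digraph $D$, an ear of $H$ in $D$ is either a directed path in $D$ whose two end vertices lie in $H$ and whose internal vertices do not lie in $H$, or a directed cycle in $D$ having exactly one vertex in $H$. An ear decomposition of a strong digraph $D$ is a sequence $(D_0,D_1,\ldots,D_k)$ of strong subdigraphs of $D$ such that $D_0$ is a directed cycle, $D_{j+1}=D_j\cup P_j$ where $P_j$ is an ear of $D_j$ in $D$ for every $j\in\{0,\ldots,k-1\}$, and $D_k=D$. For an integer $i\geq 1$, $\mathcal{LE}_i$ denotes the family of strong digraphs having an ear decomposition in which every ear has length at least $i$. *)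

From mathcomp Require Import all_boot.
Set Implicit Arguments. Unset Strict Implicit. Unset Printing Implicit Defensive.

Section Digraphs.
Variable T : finType.
Variable E : rel T.

Definition loopless : Prop := irreflexive E.
Definition oriented : Prop := forall x y, E x y -> ~~ E y x.

Definition subdigraph := ({set T} * {set T * T})%type.

Definition whole : subdigraph := ([set: T], [set e | E e.1 e.2]).

Definition strong_sub (H : subdigraph) : bool :=
  [forall x in H.1, forall y in H.1, connect (fun u v => (u, v) \in H.2) x y].

Definition vset (w : seq T) : {set T} := [set v in w].
Definition aset (w : seq T) : {set T * T} := [set e in zip w (behead w)].
(* length = number of arcs *)
Definition wlen (w : seq T) : nat := (size w).-1.

Definition is_dpath (w : seq T) : bool :=
  if w is x :: s then (1 <= size s) && uniq w && path E x s else false.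

(* directed cycle in D, given as w = [v0; v1; ...; v_{k-1}; v0] with
   v0, ..., v_{k-1} distinct, k >= 2 *)
Definition is_dcycle (w : seq T) : bool :=
  if w is x :: s then [&& 2 <= size s, last x s == x, uniq s & path E x s]
  else false.

Definition is_ear (H : subdigraph) (w : seq T) : bool :=
  if w is x :: s then
    (is_dpath w && (x \in H.1) && (last x s \in H.1) &&
       all (fun v => v \notin H.1) (behead (belast x s)))
    || (is_dcycle w && (#|vset w :&: H.1| == 1))
  else false.

Definition add_ear (H : subdigraph) (w : seq T) : subdigraph :=
  (H.1 :|: vset w, H.2 :|: aset w).

(* H = D_j, ps = [P_j; ...; P_{k-1}] : the remaining ears produce
   strong subdigraphs D_{j+1}, ..., D_k with D_k = D *)
Fixpoint ears_from (H : subdigraph) (ps : seq (seq T)) : bool :=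
  if ps is p :: ps' then
    [&& is_ear H p, strong_sub (add_ear H p) & ears_from (add_ear H p) ps']
  else H == whole.

(* D is in LE_i: it has an ear decomposition (D_0, ..., D_k), D_0 a directed
   cycle, in which every ear has length at least i *)
Definition LE (i : nat) : Prop :=
  exists (c : seq T) (ps : seq (seq T)),
    [/\ is_dcycle c, strong_sub (vset c, aset c),
        all (fun p => i <= wlen p) ps & ears_from (vset c, aset c) ps].

Definition Nout (v : T) : {set T} := [set u | E v u].
Definition Nout2 (v : T) : {set T} :=
  (\bigcup_(u in Nout v) Nout u) :\: Nout v.

End Digraphs.

From mathcomp Require Import all_boot.
Set Implicit Arguments. Unset Strict Implicit. Unset Printing Implicit Defensive.

(* Every ear of length at least 2 has an internal vertex outside the current
   subdigraph, and the only arc leaving it is the next arc of the ear. Hence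
   the last ear of the decomposition (or the initial cycle, if there is no
   ear) supplies a vertex x of out-degree at most 1 in D. As D is strong, x
   has a unique out-neighbour y, and y has an out-neighbour z <> y, which
   lies in the second out-neighbourhood of x. *)

Lemma mem_zip_fst (S U : eqType) (s : seq S) (t : seq U) x y :
  (x, y) \in zip s t -> x \in s.
Proof.
elim: s t => [|a s IH] [|b t] //=; rewrite !inE.
by case/orP => [/eqP[-> _]|/IH ->]; rewrite ?eqxx ?orbT.
Qed.

Lemma uniq_zip_functional (S U : eqType) (s : seq S) (t : seq U) x y1 y2 :
  uniq s -> (x, y1) \in zip s t -> (x, y2) \in zip s t -> y1 = y2.
Proof.
elim: s t => [|a s IH] [|b t] //= /andP[a_s s_uniq]; rewrite !inE.
case/orP=> [/eqP[-> ->]|xy1] /orP[/eqP[]|xy2].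
- by move=> ->.
- by move: a_s; rewrite (mem_zip_fst xy2).
- by move=> xa; move: a_s; rewrite -xa (mem_zip_fst xy1).
- exact: IH xy1 xy2.
Qed.

Section EarDecomposition.
Variable T : finType.
Variable E : rel T.

Definition out_unique (A : {set T * T}) (x : T) : Prop :=
  forall y1 y2, (x, y1) \in A -> (x, y2) \in A -> y1 = y2.

Definition tails_in (H : subdigraph T) : Prop :=
  forall x y, (x, y) \in H.2 -> x \in H.1.

Lemma aset_cons (a : T) s : aset (a :: s) = [set e in zip (belast a s) s].
Proof.
congr [set e in _]; rewrite /= lastI -cats1 -[s in zip _ s]cats0.
by rewrite zip_cat ?size_belast // cats0.
Qed.

Lemma aset_tail (w : seq T) x y : (x, y) \in aset w -> x \in w.
Proof. by rewrite inE => /mem_zip_fst. Qed.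

Lemma aset_out_unique (a : T) s x :
  uniq (belast a s) -> out_unique (aset (a :: s)) x.
Proof.
by move=> uniq_s y1 y2; rewrite aset_cons !inE; apply: uniq_zip_functional.
Qed.

Lemma tails_in_walk (w : seq T) : tails_in (vset w, aset w).
Proof. by move=> x y /aset_tail; rewrite inE. Qed.

Lemma tails_in_add_ear H (p : seq T) : tails_in H -> tails_in (add_ear H p).
Proof.
move=> tailsH x y; rewrite !in_setU => /orP[/tailsH -> //|/aset_tail xp].
by rewrite inE xp orbT.
Qed.

Lemma add_ear_out_unique H (p : seq T) x : tails_in H -> x \notin H.1 ->
  out_unique (aset p) x -> out_unique (add_ear H p).2 x.
Proof.
move=> tailsH xH uniq_p y1 y2; rewrite !in_setU.
have notH y : (x, y) \notin H.2 by apply: contra xH => /tailsH.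
by rewrite (negbTE (notH y1)) (negbTE (notH y2)); apply: uniq_p.
Qed.

Lemma dpath_belast_uniq (a : T) s : is_dpath E (a :: s) -> uniq (belast a s).
Proof. by case/andP=> /andP[_]; rewrite lastI rcons_uniq => /andP[]. Qed.

(* The closing vertex [a] is listed twice in a cycle [a :: s], so [belast a s]
   is a rotation of the duplicate-free [s]. *)
Lemma dcycle_belast_uniq (a : T) s : is_dcycle E (a :: s) -> uniq (belast a s).
Proof.
case/and4P=> _ /eqP last_s uniq_s _.
have : perm_eq (a :: s) (a :: belast a s).
  by rewrite [in X in perm_eq X]lastI last_s perm_rcons.
by rewrite perm_cons => /perm_uniq <-.
Qed.

Lemma dcycle_card_vset (c : seq T) : is_dcycle E c -> 1 < #|vset c|.
Proof.
case: c => [|a s] // /and4P[size_s _ uniq_s _].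
have /card_uniqP card_s := uniq_s.
apply: leq_trans (subset_leq_card (_ : [set v in s] \subset vset (a :: s))).
  by rewrite cardsE card_s.
by apply/subsetP => v; rewrite !inE => ->; rewrite orbT.
Qed.

Lemma ear_out_unique H (p : seq T) x : is_ear E H p -> out_unique (aset p) x.
Proof.
case: p => [|a s] //= /orP[/andP[/andP[/andP[dpath _] _] _]|/andP[dcyc _]].
  exact/aset_out_unique/dpath_belast_uniq.
exact/aset_out_unique/dcycle_belast_uniq.
Qed.

Lemma ear_new_vertex H (p : seq T) : is_ear E H p -> 1 < wlen p ->
  exists2 x, x \in p & x \notin H.1.
Proof.
case: p => [|a s] //= /orP[/andP[_ internal]|/andP[cyc /eqP card1]] len_p.
  case: s internal len_p => [|b [|c s]] //= /andP[bH _] _.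
  by exists b; rewrite ?inE ?eqxx ?orbT.
have [/setIidPl capE|/subsetPn[x]] := boolP (vset (a :: s) \subset H.1).
  by have := @dcycle_card_vset (a :: s) cyc; rewrite -capE card1.
by rewrite inE; exists x.
Qed.

Lemma ears_from_last H ps : tails_in H -> ears_from E H ps ->
  H = whole E \/ exists H' p,
    [/\ tails_in H', is_ear E H' p, p \in ps & add_ear H' p = whole E].
Proof.
elim: ps H => [|p ps IH] H tailsH /=; first by move/eqP; left.
case/and3P=> earp _ /(IH _ (@tails_in_add_ear _ p tailsH)).
case=> [<-|[H' [q [tailsH' earq qps whole_q]]]].
  by right; exists H, p; rewrite inE eqxx.
by right; exists H', q; rewrite inE qps orbT.
Qed.

Lemma ears_from_strong H ps :
  strong_sub H -> ears_from E H ps -> strong_sub (whole E).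
Proof.
elim: ps H => [|p ps IH] H strongH /=; first by move/eqP <-.
by case/and3P=> _ /IH; apply.
Qed.

Lemma LE_strong i : LE E i -> strong_sub (whole E).
Proof. by case=> c [ps [_ strong_c _ /ears_from_strong]]; apply. Qed.

Lemma LE_out_unique i : 1 < i -> LE E i -> exists x, out_unique (whole E).2 x.
Proof.
move=> i_gt1 [c [ps [cyc _ long_ps]]] /(ears_from_last (@tails_in_walk c)).
case=> [<-|[H [p [tailsH earp pps <-]]]].
  case: c cyc => [|a s] // cyc.
  by exists a; apply: aset_out_unique (dcycle_belast_uniq cyc).
have len_p : 1 < wlen p by apply: leq_trans i_gt1 (allP long_ps p pps).
have [x _ xH] := ear_new_vertex earp len_p.
by exists x; apply: add_ear_out_unique tailsH xH (ear_out_unique earp).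
Qed.

Lemma strong_whole_connect : strong_sub (whole E) -> forall x y, connect E x y.
Proof.
move=> /forallP strongE x y.
have /implyP/(_ (in_setT x))/forallP/(_ y)/implyP/(_ (in_setT y)) := strongE x.
by rewrite (@eq_connect _ _ E) // => u v; rewrite inE.
Qed.

Lemma connect_out_neighbour x y : connect E x y -> x != y -> exists z, E x z.
Proof.
case/connectP=> [[|z q] /= xq ->]; first by rewrite eqxx.
by case/andP: xq => xz _ _; exists z.
Qed.

Lemma out_unique_second_neighbourhood x : loopless E ->
  strong_sub (whole E) -> out_unique (whole E).2 x ->
  #|Nout E x| <= #|Nout2 E x|.
Proof.
move=> loopless_E /strong_whole_connect connE uniq_x.
case: (pickP (E x)) => [y xy|no_out]; last first.
  rewrite (_ : Nout E x = set0) ?cards0 //.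
  by apply/setP=> z; rewrite !inE no_out.
have Nx : Nout E x = [set y].
  apply/setP=> z; rewrite !inE; apply/idP/eqP => [xz|-> //].
  by apply: uniq_x; rewrite inE.
have yx : y != x by apply: contraTneq xy => ->; rewrite loopless_E.
have [z yz] := connect_out_neighbour (connE y x) yx.
rewrite Nx cards1 card_gt0; apply/set0Pn; exists z.
rewrite /Nout2 Nx !inE; apply/andP; split.
  by apply: contraTneq yz => ->; rewrite loopless_E.
by apply/bigcupP; exists y; rewrite ?inE.
Qed.

End EarDecomposition.

Theorem mainTheorem1 (i : nat) (T : finType) (E : rel T) :
  2 <= i -> loopless E -> oriented E -> LE E i ->
  exists v : T, #|Nout E v| <= #|Nout2 E v|.
Proof.
move=> i_ge2 loopless_E _ LE_i.
have [x uniq_x] := LE_out_unique i_ge2 LE_i.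
exists x; apply: out_unique_second_neighbourhood uniq_x => //.
exact: LE_strong LE_i.
Qed.
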